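(* Let $V$ be a finite set and let $(V,G)$ be an association scheme with identity relation $1=\{(v,v)\mid v\in V\}$. Let $\equiv_G$ denote the equivalence relation on $V\times V$ whose classes are the relations in $G$. Let $\mathcal{P}_1=\{V\}$, $\mathcal{P}_2=G\setminus\{1\}$, and let $\mathcal{P}_3$ be the partition of $V^{(3)}$ such that $(u_1,u_2,u_3)$ and $(v_1,v_2,v_3)$ lie in the same class if and only if $(u_1,u_2)\equiv_G(v_1,v_2)$, $(u_1,u_3)\equiv_G(v_1,v_3)$ and $(u_2,u_3)\equiv_G(v_2,v_3)$. Then $\{\mathcal{P}_1,\mathcal{P}_2,\mathcal{P}_3\}$ is a $3$-scheme on $V$.
   Context: For a finite set $V$ and $s\geq1$, let $V^{(s)}$ be the set of $s$-tuples of pairwise distinct elements of $V$. For $s>1$ and $1\leq i\leq s$, $\pi^s_i:V^{(s)}\to V^{(s-1)}$ deletes the $i$-th coordinate. $\mathrm{Symm}_s$ acts on $V^{(s)}$ by $(v_1,\dots,v_s)^\tau=(v_{1^\tau},\dots,v_{s^\tau})$. An $m$-collection on $V$ is a set $\{\mathcal{P}_1,\dots,\mathcal{P}_m\}$ where $\mathcal{P}_s$ is a partition of $V^{(s)}$ (classes are called colors). It is an $m$-scheme if for every $1<s\leq m$: (compatibility) whenever $\bar u,\bar v$ lie in the same color of $\mathcal{P}_s$, for every $i$ the tuples $\pi^s_i(\bar u),\pi^s_i(\bar v)$ lie in the same color of $\mathcal{P}_{s-1}$; (regularity) whenever $\bar u,\bar v$ lie in the same color of $\mathcal{P}_{s-1}$,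 for every $1\leq i\leq s$ and every $P\in\mathcal{P}_s$, $\#\{\bar u'\in P\mid \pi^s_i(\bar u')=\bar u\}=\#\{\bar v'\in P\mid\pi^s_i(\bar v')=\bar v\}$; (invariance) for every $P\in\mathcal{P}_s$ and $\tau\in\mathrm{Symm}_s$, $\{\bar v^\tau\mid\bar v\in P\}\in\mathcal{P}_s$. An association scheme is a pair $(X,G)$ with $X$ finite and $G$ a partition of $X\times X$ containing the identity relation, closed under $g\mapsto\{(y,x)\mid(x,y)\in g\}$, and such that for all $f,g,h\in G$ the number $\#\{\gamma\mid(\alpha,\gamma)\in f,(\gamma,\beta)\in g\}$ is the same for all $(\alpha,\beta)\in h$. *)

From mathcomp Require Import all_boot fingroup perm.
Set Implicit Arguments. Unset Strict Implicit. Unset Printing Implicit Defensive.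

Section Defs.
Variable V : finType.

Definition distinct_tuples (s : nat) : {set s.-tuple V} := [set t : s.-tuple V | uniq t].

Definition del_coord (s : nat) (i : 'I_s.+1) (t : s.+1.-tuple V) : s.-tuple V :=
  [tuple tnth t (lift i j) | j < s].

Definition tuple_act (s : nat) (t : s.-tuple V) (tau : 'S_s) : s.-tuple V :=
  [tuple tnth t (tau j) | j < s].

(* an m-collection: a partition P s of V^(s) for every 1 <= s <= m *)
Definition collection := forall s : nat, {set {set s.-tuple V}}.

Definition same_color (s : nat) (P : {set {set s.-tuple V}}) (u v : s.-tuple V) : Prop :=
  exists2 Q, Q \in P & (u \in Q) && (v \in Q).

Definition is_m_scheme (m : nat) (P : collection) : Prop :=
  (forall s, 1 <= s <= m -> partition (P s) (distinct_tuples s)) /\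
  (forall s, 1 <= s -> s.+1 <= m ->
     (forall (u v : s.+1.-tuple V), same_color (P s.+1) u v ->
        forall i : 'I_s.+1, same_color (P s) (del_coord i u) (del_coord i v)) /\
     (forall (u v : s.-tuple V), same_color (P s) u v ->
        forall (i : 'I_s.+1) (Q : {set s.+1.-tuple V}), Q \in P s.+1 ->
          #|[set u' in Q | del_coord i u' == u]| = #|[set v' in Q | del_coord i v' == v]|) /\
     (forall (Q : {set s.+1.-tuple V}) (tau : 'S_s.+1), Q \in P s.+1 ->
        [set tuple_act t tau | t in Q] \in P s.+1)).

Definition id_rel : {set V * V} := [set x | x.1 == x.2].
Definition transp_rel (g : {set V * V}) : {set V * V} := [set (x.2, x.1) | x in g].

Definition is_assoc_scheme (G : {set {set V * V}}) : Prop :=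
  partition G [set: V * V] /\
  id_rel \in G /\
  (forall g, g \in G -> transp_rel g \in G) /\
  (forall f g h, f \in G -> g \in G -> h \in G ->
     forall a b a' b', (a, b) \in h -> (a', b') \in h ->
       #|[set c | ((a, c) \in f) && ((c, b) \in g)]| =
       #|[set c | ((a', c) \in f) && ((c, b') \in g)]|).

Definition equivG (G : {set {set V * V}}) (x y : V * V) : bool :=
  [exists g in G, (x \in g) && (y \in g)].


Definition rel_to_tuples (g : {set V * V}) : {set 2.-tuple V} :=
  [set t : 2.-tuple V | (tnth t ord0, tnth t ord_max) \in g].

Definition P1 : {set {set 1.-tuple V}} := [set distinct_tuples 1].
Definition P2 (G : {set {set V * V}}) : {set {set 2.-tuple V}} :=
  [set rel_to_tuples g | g in G :\ id_rel].

Definition pr3 (t : 3.-tuple V) (i j : nat) (Hi : i < 3) (Hj : j < 3) : V * V :=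
  (tnth t (Ordinal Hi), tnth t (Ordinal Hj)).

Definition same3 (G : {set {set V * V}}) (u v : 3.-tuple V) : bool :=
  [&& equivG G (pr3 u (isT : 0 < 3) (isT : 1 < 3)) (pr3 v (isT : 0 < 3) (isT : 1 < 3)),
      equivG G (pr3 u (isT : 0 < 3) (isT : 2 < 3)) (pr3 v (isT : 0 < 3) (isT : 2 < 3)) &
      equivG G (pr3 u (isT : 1 < 3) (isT : 2 < 3)) (pr3 v (isT : 1 < 3) (isT : 2 < 3))].

Definition class3 (G : {set {set V * V}}) (u : 3.-tuple V) : {set 3.-tuple V} :=
  [set v in distinct_tuples 3 | same3 G u v].

Definition P3 (G : {set {set V * V}}) : {set {set 3.-tuple V}} :=
  [set class3 G u | u in distinct_tuples 3].

Definition coll_of_assoc (G : {set {set V * V}}) : collection :=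
  fun s => match s as n return {set {set n.-tuple V}} with
           | 1 => P1 | 2 => P2 G | 3 => P3 G | _ => set0 end.

End Defs.

From mathcomp Require Import all_boot fingroup perm.
Set Implicit Arguments. Unset Strict Implicit. Unset Printing Implicit Defensive.

(* Index the relations of the scheme by the block [rel_of G x] containing a
   pair x. A distinct triple is then coloured by its profile, the 3x3 table of
   relations between its entries; deleting a coordinate reads off a sub-table,
   and permuting coordinates permutes the table, which gives compatibility and
   invariance. Regularity is counting: the extensions of a pair (x0, x1) into a
   fixed colour of triples are the c with (x0, c) and (c, x1) in two fixed
   relations, so their number is an intersection number of the association
   scheme and depends only on the relation containing (x0, x1). *)

Lemma ord2P (k : 'I_2) : k = ord0 \/ k = ord_max.
Proof. by case: k => [[|[|]]] // Hk; [left|right]; apply: val_inj. Qed.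

Lemma ord3P (k : 'I_3) :
  [\/ k = Ordinal (isT : 0 < 3), k = Ordinal (isT : 1 < 3) | k = Ordinal (isT : 2 < 3)].
Proof.
by case: k => [[|[|[|]]]] // Hk; [apply: Or31 | apply: Or32 | apply: Or33]; apply: val_inj.
Qed.

Section Tuples.
Variable V : finType.

Lemma uniq_tuple1 (t : 1.-tuple V) : uniq t.
Proof. by case: t => [[|a [|b s]] Hs]. Qed.

Lemma uniq_tuple2 (t : 2.-tuple V) : uniq t = (tnth t ord0 != tnth t ord_max).
Proof. by case: t => [[|a [|b [|c s]]] Hs] //; rewrite /tnth /= inE andbT. Qed.

Definition ins_coord s (i : 'I_s.+1) (u : s.-tuple V) (c : V) : s.+1.-tuple V :=
  [tuple if unlift i j is Some k then tnth u k else c | j < s.+1].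

Lemma tnth_ins_coord s (i : 'I_s.+1) (u : s.-tuple V) c : tnth (ins_coord i u c) i = c.
Proof. by rewrite tnth_mktuple unlift_none. Qed.

Lemma tnth_ins_coord_lift s (i : 'I_s.+1) (u : s.-tuple V) c k :
  tnth (ins_coord i u c) (lift i k) = tnth u k.
Proof. by rewrite tnth_mktuple liftK. Qed.

Lemma del_ins_coord s (i : 'I_s.+1) (u : s.-tuple V) c : del_coord i (ins_coord i u c) = u.
Proof. by apply: eq_from_tnth => j; rewrite tnth_mktuple tnth_ins_coord_lift. Qed.

Lemma ins_del_coord s (i : 'I_s.+1) (t : s.+1.-tuple V) :
  ins_coord i (del_coord i t) (tnth t i) = t.
Proof.
apply: eq_from_tnth => j; case: (unliftP i j) => [k ->|->].
  by rewrite tnth_ins_coord_lift tnth_mktuple.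
by rewrite tnth_ins_coord.
Qed.

Lemma card_del_coord_fiber s (i : 'I_s.+1) (u : s.-tuple V) (Q : {set s.+1.-tuple V}) :
  #|[set t in Q | del_coord i t == u]| = #|[set c | ins_coord i u c \in Q]|.
Proof.
have -> : [set t in Q | del_coord i t == u] = ins_coord i u @: [set c | ins_coord i u c \in Q].
  apply/setP => t; rewrite inE; apply/andP/imsetP => [[HQ /eqP <-]|[c Hc ->]].
    by exists (tnth t i); rewrite ?inE ins_del_coord.
  by rewrite inE in Hc; rewrite Hc del_ins_coord.
by apply: card_imset => c d E; rewrite -(tnth_ins_coord i u c) E tnth_ins_coord.
Qed.

Lemma tnth_tuple_act s (t : s.-tuple V) (tau : 'S_s) j :
  tnth (tuple_act t tau) j = tnth t (tau j).
Proof. exact: tnth_mktuple. Qed.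

Lemma tuple_actM s (t : s.-tuple V) (r p : 'S_s) :
  tuple_act (tuple_act t p) r = tuple_act t (r * p)%g.
Proof. by apply: eq_from_tnth => j; rewrite !tnth_tuple_act permM. Qed.

Lemma tuple_act1 s (t : s.-tuple V) : tuple_act t 1 = t.
Proof. by apply: eq_from_tnth => j; rewrite tnth_tuple_act perm1. Qed.

Lemma imset_tuple_act s (Q : {set s.-tuple V}) (tau : 'S_s) :
  [set tuple_act t tau | t in Q] = [set t | tuple_act t tau^-1 \in Q].
Proof.
apply/setP => t; rewrite inE; apply/imsetP/idP => [[t0 Ht0 ->]|H].
  by rewrite tuple_actM mulVg tuple_act1.
by exists (tuple_act t tau^-1) => //; rewrite tuple_actM mulgV tuple_act1.
Qed.

Lemma uniq_tuple_act s (t : s.-tuple V) (tau : 'S_s) : uniq t -> uniq (tuple_act t tau).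
Proof.
move=> /tuple_uniqP Ht; apply/tuple_uniqP => a b.
by rewrite !tnth_tuple_act => /Ht /perm_inj.
Qed.

Lemma in_transp_rel (g : {set V * V}) a b : ((a, b) \in transp_rel g) = ((b, a) \in g).
Proof. by apply/imsetP/idP => [[[x y] Hxy [-> ->]] //|H]; exists (b, a). Qed.

Lemma transp_relK (g : {set V * V}) : transp_rel (transp_rel g) = g.
Proof. by apply/setP => [[a b]]; rewrite !in_transp_rel. Qed.

Lemma transp_id_rel : transp_rel (id_rel V) = id_rel V.
Proof. by apply/setP => [[a b]]; rewrite in_transp_rel !inE eq_sym. Qed.

End Tuples.

Section RelationOfPair.
Variables (V : finType) (G : {set {set V * V}}).
Hypothesis partG : partition G [set: V * V].

Definition rel_of (x : V * V) : {set V * V} := pblock G x.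

Lemma rel_of_mem x : rel_of x \in G.
Proof. by case/and3P: partG => /eqP Hc _ _; apply: pblock_mem; rewrite Hc inE. Qed.

Lemma mem_rel_of x : x \in rel_of x.
Proof. by case/and3P: partG => /eqP Hc _ _; rewrite /rel_of mem_pblock Hc inE. Qed.

Lemma rel_ofE x g : g \in G -> x \in g -> rel_of x = g.
Proof. by case/and3P: partG => _ Ht _; apply: def_pblock. Qed.

Lemma eq_rel_of x g : g \in G -> (rel_of x == g) = (x \in g).
Proof. by move=> Gg; apply/eqP/idP => [<-|]; [apply: mem_rel_of | apply: rel_ofE]. Qed.

Lemma equivG_rel_of x y : equivG G x y = (rel_of x == rel_of y).
Proof.
apply/existsP/eqP => [[g /and3P [Gg Hx Hy]]|E].
  by rewrite (rel_ofE Gg Hx) (rel_ofE Gg Hy).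
by exists (rel_of x); rewrite rel_of_mem mem_rel_of E mem_rel_of.
Qed.

End RelationOfPair.

Section AssociationScheme.
Variables (V : finType) (G : {set {set V * V}}).
Hypothesis schemeG : is_assoc_scheme G.

Let partG : partition G [set: V * V] := schemeG.1.
Let idG : id_rel V \in G := schemeG.2.1.
Let transpG : forall g, g \in G -> transp_rel g \in G := schemeG.2.2.1.
Let intersectionG := schemeG.2.2.2.

Local Notation rel_of := (rel_of G).

Lemma rel_of_swap x y : rel_of (y, x) = transp_rel (rel_of (x, y)).
Proof.
apply: rel_ofE => //; first by apply/transpG/rel_of_mem.
by rewrite in_transp_rel mem_rel_of.
Qed.

Lemma rel_of_eq_id x y : (rel_of (x, y) == id_rel V) = (x == y).
Proof. by rewrite eq_rel_of // inE. Qed.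

Lemma rel_of_diag x : rel_of (x, x) = id_rel V.
Proof. by apply/eqP; rewrite rel_of_eq_id. Qed.

Lemma card_gt0_scheme : 0 < #|V|.
Proof.
case/and3P: partG => _ _ G0.
have : id_rel V != set0 by apply: contraNneq G0 => <-.
by case/set0Pn => x _; apply/card_gt0P; exists x.1.
Qed.

(* The valencies: intersection numbers with h = id_rel. *)
Lemma card_out_rel g x y : g \in G ->
  #|[set c | (x, c) \in g]| = #|[set c | (y, c) \in g]|.
Proof.
move=> Gg; have := intersectionG Gg (transpG Gg) idG (a:=x) (b:=x) (a':=y) (b':=y).
have E z : [set c | ((z, c) \in g) && ((c, z) \in transp_rel g)] = [set c | (z, c) \in g].
  by apply/setP => c; rewrite !inE in_transp_rel andbb.
by rewrite !inE !eqxx !E => ->.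
Qed.

Lemma card_in_rel g x y : g \in G ->
  #|[set c | (c, x) \in g]| = #|[set c | (c, y) \in g]|.
Proof.
move=> Gg; have := intersectionG (transpG Gg) Gg idG (a:=x) (b:=x) (a':=y) (b':=y).
have E z : [set c | ((z, c) \in transp_rel g) && ((c, z) \in g)] = [set c | (c, z) \in g].
  by apply/setP => c; rewrite !inE in_transp_rel andbb.
by rewrite !inE !eqxx !E => ->.
Qed.

Definition profile (t : 3.-tuple V) : {ffun 'I_3 * 'I_3 -> {set V * V}} :=
  [ffun ab => rel_of (tnth t ab.1, tnth t ab.2)].

Lemma profileP (u v : 3.-tuple V) :
  reflect (forall a b, rel_of (tnth u a, tnth u b) = rel_of (tnth v a, tnth v b))
          (profile u == profile v).
Proof.
apply: (iffP eqP) => [/ffunP E a b|E]; last by apply/ffunP => ab; rewrite !ffunE.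
by have := E (a, b); rewrite !ffunE.
Qed.

(* [same3] only compares the pairs (0,1), (0,2), (1,2); the remaining entries
   of the profile are forced by transposition and the diagonal. *)
Lemma same3_profile u v : same3 G u v = (profile u == profile v).
Proof.
rewrite /same3 /pr3 !equivG_rel_of //.
apply/and3P/profileP => [[/eqP E01 /eqP E02 /eqP E12] a b|E]; last by rewrite !E.
by case: (ord3P a) => ->; case: (ord3P b) => ->;
  rewrite ?rel_of_diag // ?E01 ?E02 ?E12 // rel_of_swap ?E01 ?E02 ?E12 -?rel_of_swap.
Qed.

Lemma uniq_profile (u v : 3.-tuple V) : uniq u -> profile u = profile v -> uniq v.
Proof.
move=> /tuple_uniqP Hu /eqP /profileP E; apply/tuple_uniqP => a b Hab; apply: Hu.
by apply/eqP; rewrite -rel_of_eq_id E Hab rel_of_diag.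
Qed.

Lemma mem_class3 (w t : 3.-tuple V) :
  uniq w -> (t \in class3 G w) = (profile w == profile t).
Proof.
move=> Hw; rewrite !inE same3_profile andb_idl // => /eqP.
exact: uniq_profile.
Qed.

Lemma partition_P1 : partition (P1 V) (distinct_tuples V 1).
Proof.
have [x _] := card_gt0P card_gt0_scheme.
apply/and3P; split; first by rewrite /cover /P1 big_set1.
  by rewrite /P1 trivIset1.
by rewrite /P1 inE eq_sym; apply/set0Pn; exists [tuple x]; rewrite inE.
Qed.

Lemma partition_P2 : partition (P2 G) (distinct_tuples V 2).
Proof.
have rel_P2 g : g \in G :\ id_rel V -> g \in G /\ g != id_rel V.
  by rewrite !inE => /andP [].
apply/and3P; split.
- apply/eqP/setP => t; rewrite inE uniq_tuple2; apply/bigcupP/idP.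
    case=> _ /imsetP [g /rel_P2 [Gg g_id] ->]; rewrite inE => Ht.
    by rewrite -rel_of_eq_id (rel_ofE partG Gg Ht).
  move=> Ht; exists (rel_to_tuples (rel_of (tnth t ord0, tnth t ord_max))).
    by apply: imset_f; rewrite !inE rel_of_eq_id Ht rel_of_mem.
  by rewrite inE mem_rel_of.
- apply/trivIsetP => _ _ /imsetP [g /rel_P2 [Gg _] ->] /imsetP [h /rel_P2 [Gh _] ->].
  rewrite -setI_eq0; apply: contraR => /set0Pn [t]; rewrite !inE => /andP [Hg Hh].
  by rewrite -(rel_ofE partG Gg Hg) -(rel_ofE partG Gh Hh).
- apply/imsetP => [[g /rel_P2 [Gg _] E]].
  have : g != set0 by apply: contraTneq Gg => ->; case/and3P: partG.
  case/set0Pn => [[a b] Hab].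
  have : [tuple a; b] \in rel_to_tuples g by rewrite inE.
  by rewrite -E inE.
Qed.

Lemma partition_P3 : partition (P3 G) (distinct_tuples V 3).
Proof.
have -> : P3 G = preim_partition profile (distinct_tuples V 3).
  apply: eq_imset => u; apply/setP => t.
  by rewrite /class3 !inE same3_profile.
exact: preim_partitionP.
Qed.

Lemma compatible_P2 (u v : 2.-tuple V) (i : 'I_2) :
  same_color (P1 V) (del_coord i u) (del_coord i v).
Proof. by exists (distinct_tuples V 1); rewrite ?inE ?uniq_tuple1. Qed.

Lemma compatible_P3 (u v : 3.-tuple V) (i : 'I_3) :
  same_color (P3 G) u v -> same_color (P2 G) (del_coord i u) (del_coord i v).
Proof.
case=> _ /imsetP [w Hw ->] /andP [Hu Hv]; rewrite inE in Hw.
have uniq_u : uniq u by move: Hu; rewrite !inE => /andP [].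
rewrite !mem_class3 // in Hu Hv.
have E a b : rel_of (tnth u a, tnth u b) = rel_of (tnth v a, tnth v b).
  by apply/profileP; rewrite -(eqP Hu) -(eqP Hv).
exists (rel_to_tuples (rel_of (tnth u (lift i ord0), tnth u (lift i ord_max)))).
  apply: imset_f; rewrite !inE (rel_of_mem partG) andbT rel_of_eq_id.
  by apply/negP => /eqP /(tuple_uniqP _ uniq_u) /lift_inj.
by rewrite !inE !tnth_mktuple (mem_rel_of partG) E (mem_rel_of partG).
Qed.

Lemma regular_P2 (u v : 1.-tuple V) (i : 'I_2) (Q : {set 2.-tuple V}) :
  Q \in P2 G ->
  #|[set t in Q | del_coord i t == u]| = #|[set t in Q | del_coord i t == v]|.
Proof.
case/imsetP => g; rewrite !inE => /andP [_ Gg] ->; rewrite !card_del_coord_fiber.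
case: (ord2P i) => ->.
- have S w : [set c | ins_coord ord0 w c \in rel_to_tuples g] = [set c | (c, tnth w ord0) \in g].
    have E : ord_max = lift ord0 (ord0 : 'I_1) by apply: val_inj.
    by apply/setP => c; rewrite !inE E tnth_ins_coord tnth_ins_coord_lift.
  by rewrite !S; apply: card_in_rel.
- have S w : [set c | ins_coord ord_max w c \in rel_to_tuples g] = [set c | (tnth w ord0, c) \in g].
    have E : ord0 = lift ord_max (ord0 : 'I_1) by apply: val_inj.
    by apply/setP => c; rewrite !inE [in X in (tnth _ X, _)]E tnth_ins_coord tnth_ins_coord_lift.
  by rewrite !S; apply: card_out_rel.
Qed.

Lemma profile_ins_coord (w : 3.-tuple V) (i : 'I_3) (x : 2.-tuple V) c :
  (profile w == profile (ins_coord i x c)) =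
  [&& rel_of (tnth x ord0, tnth x ord_max) == rel_of (tnth w (lift i ord0), tnth w (lift i ord_max)),
      rel_of (c, tnth x ord0) == rel_of (tnth w i, tnth w (lift i ord0)) &
      rel_of (c, tnth x ord_max) == rel_of (tnth w i, tnth w (lift i ord_max))].
Proof.
apply/profileP/and3P => [E|[/eqP E01 /eqP E0 /eqP E1] a b].
  by rewrite !E !tnth_ins_coord !tnth_ins_coord_lift !eqxx.
have Ex k k' : rel_of (tnth w (lift i k), tnth w (lift i k')) = rel_of (tnth x k, tnth x k').
  by case: (ord2P k) => ->; case: (ord2P k') => ->;
    rewrite ?rel_of_diag // -?E01 // rel_of_swap -E01 -rel_of_swap.
have Ec k : rel_of (tnth w i, tnth w (lift i k)) = rel_of (c, tnth x k).
  by case: (ord2P k) => ->; rewrite ?E0 ?E1.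
case: (unliftP i a) => [ka ->|->]; case: (unliftP i b) => [kb ->|->];
  rewrite ?tnth_ins_coord ?tnth_ins_coord_lift ?rel_of_diag //.
by rewrite rel_of_swap Ec -rel_of_swap.
Qed.

Lemma regular_P3 (u v : 2.-tuple V) (i : 'I_3) (Q : {set 3.-tuple V}) :
  same_color (P2 G) u v -> Q \in P3 G ->
  #|[set t in Q | del_coord i t == u]| = #|[set t in Q | del_coord i t == v]|.
Proof.
case=> _ /imsetP [g Gg ->] /andP [Hu Hv] /imsetP [w Hw ->].
rewrite !inE in Gg Hu Hv Hw; case/andP: Gg => _ Gg; rewrite !card_del_coord_fiber.
set A0 := rel_of (tnth w i, tnth w (lift i ord0)).
set A1 := rel_of (tnth w i, tnth w (lift i ord_max)).
set B := rel_of (tnth w (lift i ord0), tnth w (lift i ord_max)).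
have fiberE (x : 2.-tuple V) : [set c | ins_coord i x c \in class3 G w] =
    if rel_of (tnth x ord0, tnth x ord_max) == B then
      [set c | ((tnth x ord0, c) \in transp_rel A0) && ((c, tnth x ord_max) \in A1)]
    else set0.
  apply/setP => c; rewrite [in LHS]inE mem_class3 // profile_ins_coord.
  case: eqP => _; last by rewrite inE.
  by rewrite inE in_transp_rel -!(eq_rel_of partG) ?rel_of_mem.
rewrite !fiberE (rel_ofE partG Gg Hu) (rel_ofE partG Gg Hv); case: eqP => // _.
by apply: (intersectionG (h:=g)) => //; rewrite ?transpG ?rel_of_mem.
Qed.

Lemma invariant_P2 (Q : {set 2.-tuple V}) (tau : 'S_2) :
  Q \in P2 G -> [set tuple_act t tau | t in Q] \in P2 G.
Proof.
case/imsetP => g; rewrite !inE => /andP [g_id Gg] ->.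
rewrite imset_tuple_act; set s := tau^-1%g.
have : s ord0 != s ord_max by rewrite (inj_eq perm_inj).
case: (ord2P (s ord0)) => E0; case: (ord2P (s ord_max)) => E1; rewrite E0 E1 // => _.
  have -> : [set t | tuple_act t s \in rel_to_tuples g] = rel_to_tuples g.
    by apply/setP => t; rewrite !inE !tnth_tuple_act E0 E1.
  by apply: imset_f; rewrite !inE g_id Gg.
have -> : [set t | tuple_act t s \in rel_to_tuples g] = rel_to_tuples (transp_rel g).
  by apply/setP => t; rewrite !inE !tnth_tuple_act E0 E1 in_transp_rel.
apply: imset_f; rewrite !inE transpG // andbT.
by apply: contra g_id => /eqP E; rewrite -(transp_relK g) E transp_id_rel.
Qed.

Lemma invariant_P3 (Q : {set 3.-tuple V}) (tau : 'S_3) :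
  Q \in P3 G -> [set tuple_act t tau | t in Q] \in P3 G.
Proof.
case/imsetP => w; rewrite inE => Hw ->.
have Hw' := uniq_tuple_act tau Hw.
have -> : [set tuple_act t tau | t in class3 G w] = class3 G (tuple_act w tau).
  rewrite imset_tuple_act; apply/setP => t; rewrite inE !mem_class3 //.
  apply/profileP/profileP => E a b.
    by have := E (tau a) (tau b); rewrite !tnth_tuple_act !permK.
  by have := E (tau^-1%g a) (tau^-1%g b); rewrite !tnth_tuple_act !permKV.
by apply: imset_f; rewrite inE.
Qed.

End AssociationScheme.

Theorem lemma2p4 (V : finType) (G : {set {set V * V}}) :
  is_assoc_scheme G -> is_m_scheme 3 (coll_of_assoc G).
Proof.
move=> schemeG; split.
  case=> [|[|[|[|s]]]] //= _.
  - exact: partition_P1 schemeG.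
  - exact: partition_P2 schemeG.
  - exact: partition_P3 schemeG.
move=> [|[|[|s]]] //= _ _; (split; [|split]).
- by move=> u v _ i; apply: compatible_P2.
- by move=> u v _ i Q; apply: regular_P2.
- by move=> Q tau; apply: invariant_P2.
- by move=> u v Huv i; apply: compatible_P3.
- by move=> u v Huv i Q; apply: regular_P3.
- by move=> Q tau; apply: invariant_P3.
Qed.
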